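(* Let $X$, $Y$ be real Banach spaces, let $\Omega$ be a measure space, $Z:=L^2(\Omega)$, and let $e:Y\to Z$ be a linear continuous dense embedding. Let $f:X\to\mathbb{R}$ and $g:X\to Y$, and consider the problem $\min f(x)$ s.t. $g(x)\le 0$. Assume that $f$ and $x\mapsto\|g_+(x)\|_Z$ are weakly lower semicontinuous on $X$. Let $(x^k)$ be a sequence generated by the augmented Lagrangian algorithm described in the context, where in Step 2 the iterate $x^{k+1}$ is chosen such that there is a sequence $\varepsilon_k\downarrow 0$ with $L_{\rho_k}(x^{k+1},w^k)\le L_{\rho_k}(x,w^k)+\varepsilon_k$ for all $x\in X$ and all $k\in\mathbb{N}$. Let $\bar x$ be a weak limit point of $(x^k)$. Then: (a) $\bar x$ is a global minimizer of the function $x\mapsto\|g_+(x)\|_Z^2$ on $X$; (b) if $\bar x$ is feasible (i.e. $g(\bar x)\le 0$), then $\bar x$ is a (global) solution of $\min f(x)$ s.t. $g(x)\le 0$.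
   Context: The order on $Y$ is induced by $Z$: $y\le 0$ in $Y$ means $e(y)\le 0$ a.e. on $\Omega$. For $z\in Z$, $z_+:=\max\{z,0\}$, $z_-:=\max\{-z,0\}$ (pointwise); for $x\in X$, $g_+(x):=(e(g(x)))_+$, and $\min$ of elements of $Z$ is pointwise. $\langle\cdot,\cdot\rangle$ is the inner product of $Z$. The augmented Lagrangian is $L_\rho(x,\lambda):=f(x)+\frac{\rho}{2}\big\|\big(g(x)+\frac{\lambda}{\rho}\big)_+\big\|_Z^2$ for $x\in X$, $\lambda\in Z$, $\rho>0$ (with $g(x)$ viewed in $Z$ via $e$). Algorithm: (S.0) Choose $(x^0,\lambda^0)\in X\times Z$, $\rho_0>0$, $w^{\max}\in Z$ with $w^{\max}\ge 0$ a.e., $\gamma>1$, $\tau\in(0,1)$; set $k=0$. (S.2) Choose $w^k\in Z$ with $0\le w^k\le w^{\max}$ a.e. and compute an approximate minimizer $x^{k+1}$ of $x\mapsto L_{\rho_k}(x,w^k)$ over $X$. (S.3) Set $\lambda^{k+1}:=(w^k+\rho_k g(x^{k+1}))_+$. If $k=0$ or $\big\|\min\{-g(x^{k+1}),w^k/\rho_k\}\big\|_Z\le\tau\big\|\min\{-g(x^k),w^{k-1}/\rho_{k-1}\}\big\|_Z$, set $\rho_{k+1}:=\rho_k$; otherwise set $\rho_{k+1}:=\gamma\rho_k$. (S.4) Set $k\leftarrow k+1$ and go to (S.2). The algorithm is run without stopping, producing infinite sequences. *)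

From HB Require Import structures.
From mathcomp Require Import all_boot all_order all_algebra.
From mathcomp Require Import all_classical all_reals all_analysis.
Set Implicit Arguments. Unset Strict Implicit. Unset Printing Implicit Defensive.
Import Order.TTheory GRing.Theory Num.Theory.
Import numFieldNormedType.Exports.
Local Open Scope classical_set_scope.
Local Open Scope ring_scope.

Section L2.
Context {R : realType} {d : measure_display} {T : measurableType d}
  (mu : {measure set T -> \bar R}).

(* Elements of Z = L^2(Omega) are represented by functions T -> R;
   membership in L^2: measurable and square integrable. *)
Definition inL2 (z : T -> R) : Prop :=
  measurable_fun setT z /\ (\int[mu]_t ((z t) ^+ 2)%:E < +oo)%E.

Definition normZ (z : T -> R) : R :=
  Num.sqrt (fine (\int[mu]_t ((z t) ^+ 2)%:E)).

Definition pospart (z : T -> R) : T -> R := fun t => Num.max (z t) 0.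

Definition minZ (z1 z2 : T -> R) : T -> R := fun t => Num.min (z1 t) (z2 t).

Definition nonposZ (z : T -> R) : Prop := {ae mu, forall t, z t <= 0}.

End L2.

Section Weak.
Context {R : realType} {X : normedModType R}.

Definition cont_lin_functional (l : X -> R) : Prop :=
  (forall (a : R) (u v : X), l (a *: u + v) = a * l u + l v) /\ continuous l.

Definition weak_cvg (u : nat -> X) (x : X) : Prop :=
  forall l : X -> R, cont_lin_functional l -> l \o u @ \oo --> l x.

(* weak (sequential) lower semicontinuity:
   h x <= liminf h (u n) whenever u converges weakly to x *)
Definition weakly_lsc (h : X -> R) : Prop :=
  forall (u : nat -> X) (x : X), weak_cvg u x ->
    forall t : R, t < h x -> \forall n \near \oo, t < h (u n).

Definition weak_limit_point (u : nat -> X) (x : X) : Prop :=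
  exists phi : nat -> nat, (forall n, (phi n < phi n.+1)%N) /\ weak_cvg (u \o phi) x.

End Weak.

Section ALM.
Context {R : realType} {d : measure_display} {T : measurableType d}
  (mu : {measure set T -> \bar R}) {X : normedModType R}.

(* augmented Lagrangian L_rho(x, lambda) = f x + rho/2 ||(G x + lambda/rho)_+||^2,
   where G = e o g is g viewed in Z *)
Definition aug_lag (f : X -> R) (G : X -> T -> R) (rho : R) (x : X)
  (lam : T -> R) : R :=
  f x + rho / 2 * normZ mu (pospart (fun t => G x t + lam t / rho)) ^+ 2.

Definition ALM_sequences (f : X -> R) (G : X -> T -> R)
  (rho0 : R) (wmax : T -> R) (gamma tau : R)
  (x : nat -> X) (lam : nat -> T -> R) (rho : nat -> R)
  (w : nat -> T -> R) (eps : nat -> R) : Prop :=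
  (
      inL2 mu (lam 0%N) /\ 0 < rho0 /\ rho 0%N = rho0 /\ inL2 mu wmax /\
      {ae mu, forall t, 0 <= wmax t} /\ 1 < gamma /\ 0 < tau < 1)
  /\
  (
      (forall k, inL2 mu (w k) /\ {ae mu, forall t, 0 <= w k t <= wmax t}) /\
      (forall k (y : X), aug_lag f G (rho k) (x k.+1) (w k)
                          <= aug_lag f G (rho k) y (w k) + eps k) /\
      (forall k, eps k.+1 <= eps k) /\ eps @ \oo --> (0 : R) /\
      (forall k, lam k.+1 = pospart (fun t => w k t + rho k * G (x k.+1) t)) /\
      (forall k,
        let V := fun j : nat =>
          normZ mu (minZ (fun t => - G (x j) t) (fun t => w j.-1 t / rho j.-1)) in
        rho k.+1 = if (k == 0%N) || (V k.+1 <= tau * V k)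
                   then rho k else gamma * rho k)).

End ALM.

From HB Require Import structures.
From mathcomp Require Import all_boot all_order all_algebra.
From mathcomp Require Import all_classical all_reals all_analysis.
From mathcomp Require Import ring lra measurable_realfun.
Set Implicit Arguments. Unset Strict Implicit. Unset Printing Implicit Defensive.
Import Order.TTheory GRing.Theory Num.Theory.
Import numFieldNormedType.Exports.
Local Open Scope classical_set_scope.
Local Open Scope ring_scope.

(* Write P_k(z) = ||(g(z) + w^k/rho_k)_+||^2 and V_(k+1) = ||min(-g(x^(k+1)), w^k/rho_k)||.
   Pointwise estimates integrated over Omega give ||g_+(z)||^2 <= P_k(z)
   <= (1+d)||g_+(z)||^2 + (1+1/d)||w^k/rho_k||^2, ||w^k/rho_k|| <= ||wmax||/rho_k
   and ||g_+(x^(k+1))|| <= V_(k+1); everything else comes from the eps_k-optimality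
   of x^(k+1) for L_(rho_k)(., w^k).
   If (rho_k) is bounded it is eventually constant, so V_k -> 0 geometrically: the
   infeasibility of the iterates vanishes and, for feasible y,
   limsup rho_k (P_k(y) - P_k(x^(k+1))) <= 0.
   If rho_k -> oo, dividing the optimality inequality by rho_k gives
   ||g_+(x^(k+1))||^2 <= ||g_+(y)||^2 + o(1) as long as f(x^(k+1)) stays bounded
   below, and rho_k ||w^k/rho_k||^2 <= ||wmax||^2/rho_k -> 0 makes the penalty gap
   vanish.  Weak lower semicontinuity carries these bounds to the weak limit point. *)

Section pointwise.
Variable R : realFieldType.
Implicit Types (a b g v dl : R).

Lemma sqrD_le_Young a b dl : 0 < dl ->
  (a + b) ^+ 2 <= (1 + dl) * a ^+ 2 + (1 + dl^-1) * b ^+ 2.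
Proof.
move=> dl_gt0.
have -> : (1 + dl) * a ^+ 2 + (1 + dl^-1) * b ^+ 2 =
          (a + b) ^+ 2 + (dl * a - b) ^+ 2 / dl by field; rewrite gt_eqF.
by rewrite lerDl divr_ge0 ?sqr_ge0 ?ltW.
Qed.

Lemma sqrD_le2 a b : (a + b) ^+ 2 <= 2 * a ^+ 2 + 2 * b ^+ 2.
Proof. by have := sqrD_le_Young a b ltr01; rewrite invr1. Qed.

Lemma sqr_min_le a b : Num.min a b ^+ 2 <= a ^+ 2 + b ^+ 2.
Proof. by have := sqr_ge0 a; have := sqr_ge0 b; case: (leP a b) => _; lra. Qed.

Lemma sqr_max0_le a : Num.max a 0 ^+ 2 <= a ^+ 2.
Proof. by case: (leP a 0) => ?; nra. Qed.

Lemma max0_sqr_le_min_opp g v : 0 <= v -> Num.max g 0 ^+ 2 <= Num.min (- g) v ^+ 2.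
Proof. by move=> v_ge0; case: (leP g 0) => ?; case: (leP (- g) v) => ?; nra. Qed.

Lemma max0_sqr_le_shift g v : 0 <= v -> Num.max g 0 ^+ 2 <= Num.max (g + v) 0 ^+ 2.
Proof. by move=> v_ge0; case: (leP g 0) => ?; case: (leP (g + v) 0) => ?; nra. Qed.

Lemma max0_shift_sqr_le g v dl : 0 < dl ->
  Num.max (g + v) 0 ^+ 2 <= (1 + dl) * Num.max g 0 ^+ 2 + (1 + dl^-1) * v ^+ 2.
Proof.
move=> dl_gt0; rewrite -[v ^+ 2](real_normK (num_real v)).
apply: le_trans (sqrD_le_Young _ _ dl_gt0).
by case: (ger0P v) => ?; case: (leP g 0) => ?; case: (leP (g + v) 0) => ?; nra.
Qed.

Lemma max0_shift_nonpos_sqr_le g v : g <= 0 -> 0 <= v ->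
  Num.max (g + v) 0 ^+ 2 <= v ^+ 2.
Proof. by move=> g_le0 v_ge0; case: (leP (g + v) 0) => ?; nra. Qed.

Lemma sqr_le_max0_shift_min g v dl : 0 < dl ->
  v ^+ 2 <= (1 + dl) * Num.max (g + v) 0 ^+ 2 + (1 + dl^-1) * Num.min (- g) v ^+ 2.
Proof.
move=> dl_gt0.
have decomp : Num.max (g + v) 0 + Num.min (- g) v = v.
  by case: (leP (- g) v) => ?; case: (leP (g + v) 0) => ?; lra.
by rewrite -{1}decomp sqrD_le_Young.
Qed.

End pointwise.

Section L2_estimates.
Context {R : realType} {d : measure_display} {T : measurableType d}
  (mu : {measure set T -> \bar R}).
Implicit Types (z a b v : T -> R).

Let sqr_integral_ge0 z : (0 <= \int[mu]_t ((z t) ^+ 2)%:E)%E.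
Proof. by apply: integral_ge0 => t _; rewrite lee_fin sqr_ge0. Qed.

Let sqrE_ge0 z t : (0 <= ((z t) ^+ 2)%:E)%E.
Proof. by rewrite lee_fin sqr_ge0. Qed.

Let scaled_sqrE_ge0 (c : R) z t : 0 <= c -> (0 <= c%:E * ((z t) ^+ 2)%:E)%E.
Proof. by move=> c_ge0; rewrite -EFinM lee_fin mulr_ge0 ?sqr_ge0. Qed.

Let measurable_sqr z : measurable_fun setT z ->
  measurable_fun setT (fun t => ((z t) ^+ 2)%:E : \bar R).
Proof. by move=> mz; apply/measurable_EFinP; apply: measurable_funX. Qed.

(* [normZ] goes through [fine], so it is meaningful only for square-integrable functions. *)
Let sqr_integral_L2 z : inL2 mu z ->
  (\int[mu]_t ((z t) ^+ 2)%:E = (normZ mu z ^+ 2)%:E)%E.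
Proof.
case=> _ zfin; rewrite /normZ sqr_sqrtr ?fine_ge0 // fineK //.
by rewrite ge0_fin_numE.
Qed.

Lemma normZ_ge0 z : 0 <= normZ mu z.
Proof. exact: sqrtr_ge0. Qed.

Lemma inL2_normZ_dominated2 z a b (c1 c2 : R) :
  measurable_fun setT z -> inL2 mu a -> inL2 mu b -> 0 <= c1 -> 0 <= c2 ->
  {ae mu, forall t, z t ^+ 2 <= c1 * a t ^+ 2 + c2 * b t ^+ 2} ->
  inL2 mu z /\ normZ mu z ^+ 2 <= c1 * normZ mu a ^+ 2 + c2 * normZ mu b ^+ 2.
Proof.
move=> mz aL2 bL2 c1_ge0 c2_ge0 zab.
have ma := measurable_sqr aL2.1; have mb := measurable_sqr bL2.1.
have int_le : (\int[mu]_t ((z t) ^+ 2)%:E <=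
    (c1 * normZ mu a ^+ 2 + c2 * normZ mu b ^+ 2)%:E)%E.
  rewrite EFinD (EFinM c1) (EFinM c2) -!sqr_integral_L2 //.
  rewrite -!ge0_integralZl ?lee_fin // -ge0_integralD //;
    try by [move=> t _; exact: scaled_sqrE_ge0 | exact: emeasurable_funM].
  apply: ae_ge0_le_integral => //.
  - exact: measurable_sqr.
  - by move=> t _; rewrite adde_ge0 // scaled_sqrE_ge0.
  - by apply: emeasurable_funD; exact: emeasurable_funM.
  - by apply: filterS zab => t ztab _; rewrite -!EFinM -EFinD lee_fin.
have zL2 : inL2 mu z by split=> //; exact: le_lt_trans int_le (ltey _).
by split=> //; rewrite -lee_fin -sqr_integral_L2.
Qed.

Lemma inL2_normZ_dominated z a (c : R) :
  measurable_fun setT z -> inL2 mu a -> 0 <= c ->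
  {ae mu, forall t, z t ^+ 2 <= c * a t ^+ 2} ->
  inL2 mu z /\ normZ mu z ^+ 2 <= c * normZ mu a ^+ 2.
Proof.
move=> mz aL2 c_ge0 za.
have za0 : {ae mu, forall t, z t ^+ 2 <= c * a t ^+ 2 + 0 * a t ^+ 2}.
  by apply: filterS za => t; rewrite mul0r addr0.
by have := inL2_normZ_dominated2 mz aL2 aL2 c_ge0 (lexx 0) za0; rewrite mul0r addr0.
Qed.

Let measurable_pospart a : inL2 mu a -> measurable_fun setT (pospart a).
Proof. by move=> aL2; exact: measurable_maxr aL2.1 (measurable_cst _). Qed.

Lemma inL2_pospart a : inL2 mu a -> inL2 mu (pospart a).
Proof.
move=> aL2; apply: (proj1 (inL2_normZ_dominated (measurable_pospart aL2) aL2 ler01 _)).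
by apply: aeW => t; rewrite mul1r sqr_max0_le.
Qed.

Lemma inL2D a b : inL2 mu a -> inL2 mu b -> inL2 mu (fun t => a t + b t).
Proof.
move=> aL2 bL2; apply: (proj1 (inL2_normZ_dominated2 _ aL2 bL2 (ler0n _ 2) (ler0n _ 2) _)).
  exact: measurable_funD aL2.1 bL2.1.
by apply: aeW => t; exact: sqrD_le2.
Qed.

Lemma inL2N a : inL2 mu a -> inL2 mu (fun t => - a t).
Proof.
move=> aL2; apply: (proj1 (inL2_normZ_dominated _ aL2 ler01 _)).
  exact: measurable_funN aL2.1.
by apply: aeW => t; rewrite sqrrN mul1r.
Qed.

Lemma inL2_divr a (c : R) : inL2 mu a -> inL2 mu (fun t => a t / c).
Proof.
move=> aL2; apply: (proj1 (inL2_normZ_dominated _ aL2 (sqr_ge0 c^-1) _)).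
  exact: measurable_funM aL2.1 (measurable_cst _).
by apply: aeW => t; rewrite exprMn mulrC.
Qed.

Lemma inL2_min a b : inL2 mu a -> inL2 mu b -> inL2 mu (minZ a b).
Proof.
move=> aL2 bL2; apply: (proj1 (inL2_normZ_dominated2 _ aL2 bL2 ler01 ler01 _)).
  exact: measurable_minr aL2.1 bL2.1.
by apply: aeW => t; rewrite !mul1r sqr_min_le.
Qed.

Let measurable_shift a v : inL2 mu a -> inL2 mu v ->
  measurable_fun setT (pospart (fun t => a t + v t)).
Proof. by move=> aL2 vL2; exact: measurable_pospart (inL2D aL2 vL2). Qed.

Lemma normZ_pospart_le_min a v : inL2 mu a -> inL2 mu v -> {ae mu, forall t, 0 <= v t} ->
  normZ mu (pospart a) <= normZ mu (minZ (fun t => - a t) v).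
Proof.
move=> aL2 vL2 v_ge0.
have dom : {ae mu, forall t, pospart a t ^+ 2 <= 1 * minZ (fun t => - a t) v t ^+ 2}.
  by apply: filterS v_ge0 => t vt; rewrite mul1r max0_sqr_le_min_opp.
have [_] := inL2_normZ_dominated (measurable_pospart aL2)
  (inL2_min (inL2N aL2) vL2) ler01 dom.
by rewrite mul1r ler_sqr ?nnegrE ?normZ_ge0.
Qed.

Lemma normZ_pospart_le_shift a v : inL2 mu a -> inL2 mu v -> {ae mu, forall t, 0 <= v t} ->
  normZ mu (pospart a) ^+ 2 <= normZ mu (pospart (fun t => a t + v t)) ^+ 2.
Proof.
move=> aL2 vL2 v_ge0.
have dom : {ae mu, forall t, pospart a t ^+ 2 <= 1 * pospart (fun t => a t + v t) t ^+ 2}.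
  by apply: filterS v_ge0 => t vt; rewrite mul1r max0_sqr_le_shift.
have [_] := inL2_normZ_dominated (measurable_pospart aL2)
  (inL2_pospart (inL2D aL2 vL2)) ler01 dom.
by rewrite mul1r.
Qed.

Lemma normZ_pospart_shift_le a v dl : inL2 mu a -> inL2 mu v -> 0 < dl ->
  normZ mu (pospart (fun t => a t + v t)) ^+ 2 <=
  (1 + dl) * normZ mu (pospart a) ^+ 2 + (1 + dl^-1) * normZ mu v ^+ 2.
Proof.
move=> aL2 vL2 dl_gt0.
have dl'_gt0 : 0 < dl^-1 by rewrite invr_gt0.
apply: (proj2 (inL2_normZ_dominated2 (measurable_shift aL2 vL2)
  (inL2_pospart aL2) vL2 _ _ _)); rewrite ?addr_ge0 ?ltW //.
by apply: aeW => t; exact: max0_shift_sqr_le.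
Qed.

Lemma normZ_pospart_shift_nonpos a v : inL2 mu a -> inL2 mu v ->
  nonposZ mu a -> {ae mu, forall t, 0 <= v t} ->
  normZ mu (pospart (fun t => a t + v t)) ^+ 2 <= normZ mu v ^+ 2.
Proof.
move=> aL2 vL2 a_le0 v_ge0.
have dom : {ae mu, forall t, pospart (fun t => a t + v t) t ^+ 2 <= 1 * v t ^+ 2}.
  by apply: filterS2 a_le0 v_ge0 => t at0 vt0; rewrite mul1r max0_shift_nonpos_sqr_le.
have [_] := inL2_normZ_dominated (measurable_shift aL2 vL2) vL2 ler01 dom.
by rewrite mul1r.
Qed.

Lemma normZ_le_pospart_shift_min a v dl : inL2 mu a -> inL2 mu v -> 0 < dl ->
  normZ mu v ^+ 2 <= (1 + dl) * normZ mu (pospart (fun t => a t + v t)) ^+ 2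
                     + (1 + dl^-1) * normZ mu (minZ (fun t => - a t) v) ^+ 2.
Proof.
move=> aL2 vL2 dl_gt0.
have dl'_gt0 : 0 < dl^-1 by rewrite invr_gt0.
apply: (proj2 (inL2_normZ_dominated2 vL2.1 (inL2_pospart (inL2D aL2 vL2))
  (inL2_min (inL2N aL2) vL2) _ _ _)); rewrite ?addr_ge0 ?ltW //.
by apply: aeW => t; exact: sqr_le_max0_shift_min.
Qed.

Lemma normZ_divr_le w wm (c : R) : inL2 mu w -> inL2 mu wm ->
  {ae mu, forall t, 0 <= w t <= wm t} ->
  normZ mu (fun t => w t / c) ^+ 2 <= normZ mu wm ^+ 2 / c ^+ 2.
Proof.
move=> wL2 wmL2 w_bnd.
have dom : {ae mu, forall t, (w t / c) ^+ 2 <= c^-1 ^+ 2 * wm t ^+ 2}.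
  apply: filterS w_bnd => t /andP[w0 wwm].
  by rewrite exprMn mulrC ler_wpM2l ?sqr_ge0 // ler_sqr ?nnegrE //; exact: le_trans wwm.
have [_] := inL2_normZ_dominated (inL2_divr c wL2).1 wmL2 (sqr_ge0 _) dom.
by rewrite exprVn mulrC.
Qed.

End L2_estimates.

Lemma contraction_cvg0 (R : realType) (u : R ^nat) (q : R) (K : nat) :
  0 <= q < 1 -> (forall k, 0 <= u k) ->
  (forall k, (K <= k)%N -> u k.+1 <= q * u k) -> u @ \oo --> 0.
Proof.
move=> /andP[q_ge0 q_lt1] u_ge0 u_contr.
have geo m : u (m + K)%N <= q ^+ m * u K.
  elim: m => [|m IH]; first by rewrite add0n expr0 mul1r.
  rewrite addSn exprS -mulrA; apply: le_trans (u_contr _ (leq_addl _ _)) _.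
  by rewrite ler_wpM2l.
rewrite -(cvg_shiftn K); apply: (@squeeze_cvgr _ _ _ _ (cst 0) (fun m => q ^+ m * u K)).
- by apply: nearW => m /=; rewrite u_ge0 geo.
- exact: cvg_cst.
- rewrite -(mul0r (u K)); apply: cvgMl; apply: cvg_expr.
  by rewrite ger0_norm.
Qed.

Section weak_lsc.
Context {R : realType} {X : normedModType R}.
Implicit Types (h : X -> R) (u : nat -> X).

Lemma weakly_lsc_le h u (xb : X) (c : R) : weakly_lsc h -> weak_cvg u xb ->
  (forall eta, 0 < eta -> \forall n \near \oo, h (u n) <= c + eta) -> h xb <= c.
Proof.
move=> h_lsc u_xb h_le; apply/ler_addgt0Pr => eta eta_gt0.
rewrite leNgt; apply/negP => lt_h.
have [n [/= lt_n le_n]] := filter_ex (filterI (h_lsc u xb u_xb _ lt_h) (h_le _ eta_gt0)).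
by move: lt_n; rewrite ltNge le_n.
Qed.

Lemma weakly_lsc_sqr h : (forall z, 0 <= h z) -> weakly_lsc h ->
  weakly_lsc (fun z => h z ^+ 2).
Proof.
move=> h_ge0 h_lsc u xb u_xb t lt_t.
have [t_lt0|t_ge0] := ltP t 0.
  by apply: nearW => n; exact: lt_le_trans t_lt0 (sqr_ge0 _).
have sqrt_lt : Num.sqrt t < h xb.
  by rewrite -ltr_sqr ?nnegrE ?sqrtr_ge0 // sqr_sqrtr.
apply: filterS (h_lsc u xb u_xb _ sqrt_lt) => n lt_n.
by rewrite -(sqr_sqrtr t_ge0) ltr_sqr ?nnegrE ?sqrtr_ge0.
Qed.

Lemma weak_limit_point_shift u (xb : X) : weak_limit_point u xb ->
  exists2 psi : nat -> nat, psi n @[n --> \oo] --> \oo &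
    weak_cvg (fun n => u (psi n).+1) xb.
Proof.
case=> phi [phi_incr u_xb].
have phi_ge n : (n <= phi n)%N.
  by elim: n => // n IH; exact: leq_ltn_trans IH (phi_incr n).
have phi_gt0 n : (0 < phi n.+1)%N by exact: leq_ltn_trans (leq0n _) (phi_incr n).
exists (fun n => (phi n.+1).-1).
  move=> P [N _ NP]; exists N => // n /= le_Nn; apply: NP.
  apply: leq_trans le_Nn _.
  by rewrite -ltnS prednK ?phi_ge.
have -> : (fun n => u (phi n.+1).-1.+1) = (fun n => u (phi n.+1)).
  by apply/funext => n; rewrite prednK.
by move=> l l_lin; move: (u_xb l l_lin); rewrite -cvg_shiftS.
Qed.

End weak_lsc.

Section augmented_Lagrangian.
Context {R : realType} {d : measure_display} {T : measurableType d}
  (mu : {measure set T -> \bar R}) {X : normedModType R}.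
Variables (f : X -> R) (G : X -> T -> R) (rho0 : R) (wmax : T -> R) (gamma tau : R)
  (x : nat -> X) (lam : nat -> T -> R) (rho : nat -> R) (w : nat -> T -> R)
  (eps : nat -> R).
Hypothesis G_L2 : forall z, inL2 mu (G z).
Hypothesis alg : ALM_sequences mu f G rho0 wmax gamma tau x lam rho w eps.

Let rho0_gt0 : 0 < rho0.
Proof. by case: alg => [[_ []]]. Qed.

Let rho_0 : rho 0%N = rho0.
Proof. by case: alg => [[_ [_ []]]]. Qed.

Let wmax_L2 : inL2 mu wmax.
Proof. by case: alg => [[_ [_ [_ []]]]]. Qed.

Let gamma_gt1 : 1 < gamma.
Proof. by case: alg => [[_ [_ [_ [_ [_ []]]]]]]. Qed.

Let tau_gt0 : 0 < tau.
Proof. by case: alg => [[_ [_ [_ [_ [_ [_ /andP[]]]]]]]]. Qed.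

Let tau_lt1 : tau < 1.
Proof. by case: alg => [[_ [_ [_ [_ [_ [_ /andP[]]]]]]]]. Qed.

Let w_safe k : inL2 mu (w k) /\ {ae mu, forall t, 0 <= w k t <= wmax t}.
Proof. by case: alg => _ []. Qed.

Let approx_min k y :
  aug_lag mu f G (rho k) (x k.+1) (w k) <= aug_lag mu f G (rho k) y (w k) + eps k.
Proof. by case: alg => _ [_ []]. Qed.

Let eps_cvg0 : eps @ \oo --> (0 : R).
Proof. by case: alg => _ [_ [_ [_ []]]]. Qed.

Let rho_update k :
  let V := fun j : nat =>
    normZ mu (minZ (fun t => - G (x j) t) (fun t => w j.-1 t / rho j.-1)) in
  rho k.+1 = if (k == 0%N) || (V k.+1 <= tau * V k) then rho k else gamma * rho k.
Proof. by case: alg => _ [_ [_ [_ [_ [_]]]]]. Qed.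

Local Notation infeas z := (normZ mu (pospart (G z))).
Local Notation penalty k z :=
  (normZ mu (pospart (fun t => G z t + w k t / rho k)) ^+ 2).
(* [compl k] is the quantity V_(k+1) tested in (S.3) at iteration k+1. *)
Local Notation compl k :=
  (normZ mu (minZ (fun t => - G (x k.+1) t) (fun t => w k t / rho k))).
Local Notation shift_sq k := (normZ mu (fun t => w k t / rho k) ^+ 2).
Local Notation wmax_sq := (normZ mu wmax ^+ 2).
Local Notation rho_bounded := (exists M, forall k, rho k <= M).

Lemma rho_step k : rho k.+1 = rho k \/ rho k.+1 = gamma * rho k.
Proof. by move: (rho_update k) => /=; case: ifP => _ ->; [left|right]. Qed.

Lemma rho_gt0 k : 0 < rho k.
Proof.
elim: k => [|k IH]; first by rewrite rho_0.
by case: (rho_step k) => ->; rewrite ?mulr_gt0 // (lt_trans ltr01 gamma_gt1).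
Qed.

Lemma rho_nondecreasing : {homo rho : m n / (m <= n)%N >-> m <= n}.
Proof.
apply/nondecreasing_seqP => k; case: (rho_step k) => ->//.
by rewrite ler_peMl ?ltW ?rho_gt0.
Qed.

Lemma rho_ge_rho0 k : rho0 <= rho k.
Proof. by rewrite -rho_0 rho_nondecreasing. Qed.

Lemma compl_contract k : rho k.+2 = rho k.+1 -> compl k.+1 <= tau * compl k.
Proof.
move: (rho_update k.+1) => /=; case: ifP => // _ -> rho_eq; exfalso.
by have := gamma_gt1; have := rho_gt0 k.+1; nra.
Qed.

Lemma rho_eventually_const : rho_bounded ->
  exists K, forall k, (K <= k)%N -> rho k.+1 = rho k.
Proof.
move=> [M rho_le]; apply: contrapT => not_const.
pose c := (gamma - 1) * rho0.
have c_gt0 : 0 < c by rewrite mulr_gt0 // subr_gt0.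
have grow m : exists k, rho0 + m%:R * c <= rho k.
  elim: m => [|m [k le_k]]; first by exists 0%N; rewrite rho_0 mul0r addr0.
  have [j [le_kj rho_j]] : exists j, (k <= j)%N /\ rho j.+1 = gamma * rho j.
    apply: contrapT => no_jump; apply: not_const; exists k => j le_kj.
    by case: (rho_step j) => // ?; exfalso; apply: no_jump; exists j.
  exists j.+1; rewrite rho_j -natr1.
  have : c <= (gamma - 1) * rho j by rewrite ler_wpM2l ?rho_ge_rho0 // subr_ge0 ltW.
  by have := rho_nondecreasing le_kj; lra.
have M_ge0 : 0 <= M / c by rewrite divr_ge0 ?ltW // (lt_le_trans (rho_gt0 0) (rho_le 0)).
have [k le_k] := grow (Num.Def.archi_bound (M / c)).
have := archi_boundP M_ge0; rewrite ltr_pdivrMr //.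
by have := rho_le k; have := rho0_gt0; lra.
Qed.

Lemma rho_unbounded_cvgy : ~ rho_bounded -> forall M, \forall k \near \oo, M < rho k.
Proof.
move=> unb M; have [k lt_Mk] : exists k, M < rho k.
  apply: contrapT => h; apply: unb; exists M => k.
  by rewrite leNgt; apply/negP => ?; apply: h; exists k.
apply: filterS (nbhs_infty_ge k) => j le_kj.
exact: lt_le_trans lt_Mk (rho_nondecreasing le_kj).
Qed.

Lemma compl_cvg0 : rho_bounded -> compl k @[k --> \oo] --> 0.
Proof.
move=> /rho_eventually_const[K rho_const].
apply: (@contraction_cvg0 _ _ tau K); first by rewrite ltW.
  by move=> k; exact: normZ_ge0.
move=> k le_Kk; apply: compl_contract.
by rewrite rho_const // (leq_trans le_Kk).
Qed.

Let w_L2 k : inL2 mu (w k) := (w_safe k).1.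

Let shift_L2 k : inL2 mu (fun t => w k t / rho k) := inL2_divr (rho k) (w_L2 k).

Let shift_ge0 k : {ae mu, forall t, 0 <= w k t / rho k}.
Proof.
apply: filterS (w_safe k).2 => t /andP[w_ge0 _].
exact: divr_ge0 w_ge0 (ltW (rho_gt0 k)).
Qed.

Let rho_shift_sq_le k : rho k * shift_sq k <= wmax_sq / rho k.
Proof.
have rk := rho_gt0 k.
have -> : wmax_sq / rho k = rho k * (wmax_sq / rho k ^+ 2) by field; rewrite gt_eqF.
by rewrite ler_pM2l //; exact: normZ_divr_le (w_L2 k) wmax_L2 (w_safe k).2.
Qed.

Lemma penalty_gap_bounded : rho_bounded -> forall eta, 0 < eta ->
  \forall k \near \oo, rho k / 2 * (shift_sq k - penalty k (x k.+1)) <= eta.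
Proof.
move=> bnd eta eta_gt0; have [M rho_le] := bnd.
have W_ge0 : 0 <= wmax_sq := sqr_ge0 _.
pose dl := eta * rho0 / (wmax_sq + 1).
have dl_gt0 : 0 < dl by rewrite divr_gt0 ?mulr_gt0 // ltr_wpDl.
pose C := M / 2 * (1 + dl^-1).
have C_compl_cvg0 : (fun k => C * compl k ^+ 2) @ \oo --> 0.
  rewrite -(mulr0 C); apply: cvgMr.
  have := continuous_cvg _ (@exprn_continuous R 2 0) (compl_cvg0 bnd).
  by rewrite expr0n; apply.
have eta2_gt0 : 0 < eta / 2 by rewrite divr_gt0.
apply: filterS (cvgr_lt _ C_compl_cvg0 _ eta2_gt0) => k /= C_compl_lt.
have rk := rho_gt0 k; have r0k := rho_ge_rho0 k; have r0 := rho0_gt0.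
have P_ge0 : 0 <= penalty k (x k.+1) := sqr_ge0 _.
have young := normZ_le_pospart_shift_min (G_L2 (x k.+1)) (shift_L2 k) dl_gt0.
have compl_ge0 : 0 <= (1 + dl^-1) * compl k ^+ 2.
  by rewrite mulr_ge0 ?sqr_ge0 // addr_ge0 ?invr_ge0 ?ltW.
have gap : shift_sq k - penalty k (x k.+1) <= dl * shift_sq k + (1 + dl^-1) * compl k ^+ 2.
  by case: (leP (penalty k (x k.+1)) (shift_sq k)) => ?; nra.
have term1 : rho k / 2 * (dl * shift_sq k) <= eta / 2.
  have : rho k * shift_sq k <= wmax_sq / rho0.
    by apply: le_trans (rho_shift_sq_le k) _; rewrite ler_wpM2l // lef_pV2 ?posrE.
  have -> : rho k / 2 * (dl * shift_sq k) = dl / 2 * (rho k * shift_sq k) by ring.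
  have : dl * (wmax_sq / rho0) <= eta.
    have -> : dl * (wmax_sq / rho0) = eta * (wmax_sq / (wmax_sq + 1)).
      by rewrite /dl; field; rewrite !gt_eqF ?ltr_wpDl.
    by rewrite ger_pMr // ler_pdivrMr ?ltr_wpDl // mul1r lerDl.
  nra.
have term2 : rho k / 2 * ((1 + dl^-1) * compl k ^+ 2) <= C * compl k ^+ 2.
  by have := rho_le k; rewrite /C; nra.
have := ltW rk; nra.
Qed.

Lemma penalty_gap_unbounded : ~ rho_bounded -> forall eta, 0 < eta ->
  \forall k \near \oo, rho k / 2 * shift_sq k <= eta.
Proof.
move=> unb eta eta_gt0.
apply: filterS (rho_unbounded_cvgy unb (wmax_sq / (2 * eta))) => k lt_rk.
have rk := rho_gt0 k.
have : wmax_sq / rho k <= 2 * eta.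
  move: lt_rk; rewrite ltr_pdivrMr ?mulr_gt0 // ler_pdivrMr //; lra.
by have := rho_shift_sq_le k; lra.
Qed.

Lemma penalty_gap_vanishes y : nonposZ mu (G y) -> forall eta, 0 < eta ->
  \forall k \near \oo, rho k / 2 * (penalty k y - penalty k (x k.+1)) <= eta.
Proof.
move=> y_feas eta eta_gt0.
have gap_le k : rho k / 2 * (penalty k y - penalty k (x k.+1)) <=
                rho k / 2 * (shift_sq k - penalty k (x k.+1)).
  apply: ler_wpM2l; first by rewrite divr_ge0 ?ltW ?rho_gt0.
  rewrite lerD2r.
  exact: normZ_pospart_shift_nonpos (G_L2 y) (shift_L2 k) y_feas (shift_ge0 k).
have [bnd|unb] := pselect rho_bounded.
  by apply: filterS (penalty_gap_bounded bnd eta_gt0) => k; exact: le_trans (gap_le k).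
apply: filterS (penalty_gap_unbounded unb eta_gt0) => k.
apply/le_trans/(le_trans (gap_le k))/ler_wpM2l; first by rewrite divr_ge0 ?ltW ?rho_gt0.
by rewrite gerDl oppr_le0 sqr_ge0.
Qed.

Lemma infeasibility_vanishes_bounded : rho_bounded -> forall eta, 0 < eta ->
  \forall k \near \oo, infeas (x k.+1) <= eta.
Proof.
move=> bnd eta eta_gt0.
apply: filterS (cvgr_lt _ (compl_cvg0 bnd) _ eta_gt0) => k /= lt_eta.
apply: le_trans (ltW lt_eta).
exact: normZ_pospart_le_min (G_L2 _) (shift_L2 k) (shift_ge0 k).
Qed.

Lemma infeasibility_le_unbounded : ~ rho_bounded -> forall y m eta, 0 < eta ->
  \forall k \near \oo, m <= f (x k.+1) -> infeas (x k.+1) ^+ 2 <= infeas y ^+ 2 + eta.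
Proof.
move=> unb y m eta eta_gt0.
pose C := 2 * (f y - m + 1) + infeas y ^+ 2 + wmax_sq / rho0 + wmax_sq.
apply: filterS2 (rho_unbounded_cvgy unb (C / eta)) (cvgr_lt _ eps_cvg0 _ ltr01).
move=> k /= lt_rk eps_lt1 m_le.
have rk := rho_gt0 k; have r0k := rho_ge_rho0 k; have r0 := rho0_gt0.
have key : f (x k.+1) + rho k / 2 * penalty k (x k.+1) <=
           f y + rho k / 2 * penalty k y + eps k := approx_min k y.
have infeas_le := normZ_pospart_le_shift (G_L2 (x k.+1)) (shift_L2 k) (shift_ge0 k).
(* Young's inequality with d = 1/rho_k. *)
have penalty_y : rho k * penalty k y <=
    rho k * infeas y ^+ 2 + infeas y ^+ 2 + (1 + rho k) * (rho k * shift_sq k).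
  have rk' : 0 < (rho k)^-1 by rewrite invr_gt0.
  have := normZ_pospart_shift_le (G_L2 y) (shift_L2 k) rk'.
  rewrite invrK => /(ler_wpM2l (ltW rk)) le_Py; apply: le_trans le_Py _.
  by rewrite le_eqVlt; apply/orP; left; apply/eqP; field; rewrite gt_eqF.
have ratio_term : (1 + rho k) * (rho k * shift_sq k) <= wmax_sq / rho0 + wmax_sq.
  apply: le_trans (ler_wpM2l _ (rho_shift_sq_le k)) _; first by rewrite addr_ge0 ?ltW.
  have -> : (1 + rho k) * (wmax_sq / rho k) = wmax_sq / rho k + wmax_sq.
    by field; rewrite gt_eqF.
  by rewrite lerD2r ler_wpM2l ?sqr_ge0 // lef_pV2 ?posrE ?rho_ge_rho0.
move: lt_rk; rewrite ltr_pdivrMr // => lt_rk.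
by rewrite /C in lt_rk; nra.
Qed.

Variables (xbar : X) (psi : nat -> nat).
Hypotheses (psi_oo : psi n @[n --> \oo] --> \oo)
  (x_cvg : weak_cvg (fun n => x (psi n).+1) xbar) (f_lsc : weakly_lsc f).

Lemma limit_feasible_optimal y : nonposZ mu (G y) -> f xbar <= f y.
Proof.
move=> y_feas; apply: (weakly_lsc_le f_lsc x_cvg) => eta eta_gt0.
have eta2_gt0 : 0 < eta / 2 by rewrite divr_gt0.
suff : \forall k \near \oo, f (x k.+1) <= f y + eta by move/psi_oo.
apply: filterS2 (penalty_gap_vanishes y_feas eta2_gt0)
  (cvgr_lt _ eps_cvg0 _ eta2_gt0) => k /= gap eps_lt.
have key : f (x k.+1) + rho k / 2 * penalty k (x k.+1) <=
           f y + rho k / 2 * penalty k y + eps k := approx_min k y.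
by rewrite mulrBr in gap; lra.
Qed.

Lemma limit_infeasibility_minimal : weakly_lsc (fun z => infeas z) ->
  forall y, infeas xbar ^+ 2 <= infeas y ^+ 2.
Proof.
move=> infeas_lsc y.
have [bnd|unb] := pselect rho_bounded.
  have infeas_le0 : infeas xbar <= 0.
    apply: (weakly_lsc_le infeas_lsc x_cvg) => eta eta_gt0; rewrite add0r.
    exact: psi_oo (infeasibility_vanishes_bounded bnd eta_gt0).
  have -> : infeas xbar = 0 by apply/eqP; rewrite eq_le infeas_le0 normZ_ge0.
  by rewrite expr0n sqr_ge0.
apply: (weakly_lsc_le (weakly_lsc_sqr (fun z => normZ_ge0 _ _) infeas_lsc) x_cvg).
move=> eta eta_gt0.
have f_lb : \forall n \near \oo, f xbar - 1 < f (x (psi n).+1).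
  by apply: f_lsc x_cvg _ _; rewrite gtrBl.
apply: filterS2 f_lb (psi_oo (infeasibility_le_unbounded unb y (f xbar - 1) eta_gt0)).
by move=> n /ltW lb; apply.
Qed.

End augmented_Lagrangian.

Theorem theorem4p2 (R : realType)
  (X Y : completeNormedModType R)
  (d : measure_display) (T : measurableType d) (mu : {measure set T -> \bar R})
  (e : Y -> T -> R)
  (* e : Y -> Z = L^2(Omega) linear *)
  (e_L2 : forall y, inL2 mu (e y))
  (e_lin : forall (a : R) (y1 y2 : Y),
      {ae mu, forall t, e (a *: y1 + y2) t = a * e y1 t + e y2 t})
  (* continuous *)
  (e_cont : forall (y : Y) (eta : R), 0 < eta ->
      exists2 delta : R, 0 < delta &
        forall y' : Y, `|y' - y| < delta -> normZ mu (fun t => e y' t - e y t) < eta)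
  (* injective (embedding) *)
  (e_inj : forall y1 y2 : Y, {ae mu, forall t, e y1 t = e y2 t} -> y1 = y2)
  (* dense range *)
  (e_dense : forall z : T -> R, inL2 mu z -> forall eta : R, 0 < eta ->
      exists y : Y, normZ mu (fun t => e y t - z t) < eta)
  (f : X -> R) (g : X -> Y)
  (f_wlsc : weakly_lsc f)
  (gp_wlsc : weakly_lsc (fun x => normZ mu (pospart (e (g x)))))
  (rho0 : R) (wmax : T -> R) (gamma tau : R)
  (x : nat -> X) (lam : nat -> T -> R) (rho : nat -> R)
  (w : nat -> T -> R) (eps : nat -> R)
  (alg : ALM_sequences mu f (fun y => e (g y)) rho0 wmax gamma tau x lam rho w eps)
  (xbar : X) (hxbar : weak_limit_point x xbar) :
  (forall y : X, normZ mu (pospart (e (g xbar))) ^+ 2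
                 <= normZ mu (pospart (e (g y))) ^+ 2)
  /\
  (nonposZ mu (e (g xbar)) ->
     forall y : X, nonposZ mu (e (g y)) -> f xbar <= f y).
Proof.
have G_L2 z : inL2 mu (e (g z)) := e_L2 (g z).
have [psi psi_oo x_cvg] := weak_limit_point_shift hxbar.
split=> [|_ y].
  exact: (limit_infeasibility_minimal G_L2 alg psi_oo x_cvg f_wlsc gp_wlsc).
exact: (limit_feasible_optimal G_L2 alg psi_oo x_cvg f_wlsc).
Qed.
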